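(* Assume the standing assumptions below and let $s>0$. Then every solution $(\phi_1,\phi_2,\phi_3)$ of (TW) (nonnegative, bounded, $C^1$) satisfies $(\phi_1,\phi_2,\phi_3)(z)\to(0,0,0)$ as $z\to-\infty$.
   Context: Standing assumptions. $d_1,d_2,d_3,r_1,r_2,r_3,a,b,h,k$ are positive constants with $a>1$, $0<h,k<1$, $0<b<\frac{1}{2(a-1)}$. For $i=1,2,3$ the kernel $J_i:\mathbb{R}\to\mathbb{R}$ satisfies: (J1) $J_i\ge0$ is Lebesgue measurable, $\int_{\mathbb{R}}J_i=1$, and there are $\eta_i>0$ and $y_i^-<0<y_i^+$ such that $J_i>0$ on $(y_i^--\eta_i,y_i^-+\eta_i)$ and on $(y_i^+-\eta_i,y_i^++\eta_i)$; (J2) $\int_{\mathbb{R}}J_i(y)\,y\,dy=0$; (J3) there are $-\infty\le\tilde\lambda_i<0<\hat\lambda_i\le+\infty$ such that $I_i(\lambda):=\int_{\mathbb{R}}J_i(y)e^{\lambda y}dy<+\infty$ for $\lambda\in(\tilde\lambda_i,\hat\lambda_i)$ and $I_i(\lambda)\to+\infty$ as $\lambda\downarrow\tilde\lambda_i$ and as $\lambda\uparrow\hat\lambda_i$. $\alpha:\mathbb{R}\to\mathbb{R}$ is continuous and satisfies: ($\alpha$1) $\alpha$ has finite limits $\alpha(\pm\infty)$ with $\alpha(-\infty)<0<\alpha(+\infty)$, and $\alpha(z)\le\alpha(+\infty)$ for all $z$; ($\alpha$2) there exist $C>0$, $\rho>0$ with $\alpha(+\infty)-\alpha(z)\le Ce^{-\rho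 z}$ for all sufficiently large $z$. For a function $\phi$ and $i\in\{1,2,3\}$, $\mathcal N_i[\phi](z):=\int_{\mathbb{R}}J_i(y)\phi(z-y)dy-\phi(z)$. For $s>0$, system (TW) is $$\begin{cases}-s\phi_1'=d_1\mathcal N_1[\phi_1]+r_1\phi_1[-1-\phi_1-k\phi_2+a\phi_3],\\ -s\phi_2'=d_2\mathcal N_2[\phi_2]+r_2\phi_2[-1-h\phi_1-\phi_2+a\phi_3],\\ -s\phi_3'=d_3\mathcal N_3[\phi_3]+r_3\phi_3[\alpha(z)-b\phi_1-b\phi_2-\phi_3],\end{cases}\quad z\in\mathbb{R},$$ and a solution means a triple of nonnegative bounded $C^1(\mathbb{R})$ functions satisfying it. *)

From HB Require Import structures.
From mathcomp Require Import all_boot all_order all_algebra.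
From mathcomp Require Import all_classical all_reals all_analysis.
Set Implicit Arguments. Unset Strict Implicit. Unset Printing Implicit Defensive.
Import Order.TTheory GRing.Theory Num.Theory.
Import numFieldNormedType.Exports.
Local Open Scope classical_set_scope.
Local Open Scope ring_scope.

Section Defs.
Variable R : realType.
Notation mu := (@lebesgue_measure R).

Definition Ilap (J : R -> R) (l : R) : \bar R :=
  (\int[mu]_(y in setT) (J y * expR (l * y))%:E)%E.

Definition blowup_left (J : R -> R) (lt : \bar R) : Prop :=
  match lt with
  | EFin r => Ilap J x @[x --> r^'+] --> +oo%E
  | -oo%E => Ilap J x @[x --> -oo] --> +oo%E
  | +oo%E => False
  end.

Definition blowup_right (J : R -> R) (lh : \bar R) : Prop :=
  match lh with
  | EFin r => Ilap J x @[x --> r^'-] --> +oo%E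
  | +oo%E => Ilap J x @[x --> +oo] --> +oo%E
  | -oo%E => False
  end.

Definition kernel_ok (J : R -> R) : Prop :=
  [/\ (forall y, 0 <= J y) /\ measurable_fun setT J,
      (\int[mu]_(y in setT) (J y)%:E = 1)%E,
      (exists (eta ym yp : R), [/\ 0 < eta, ym < 0, 0 < yp,
          (forall y, ym - eta < y < ym + eta -> 0 < J y) &
          (forall y, yp - eta < y < yp + eta -> 0 < J y)]),
      (mu.-integrable setT (fun y => (J y * y)%:E) /\
       (\int[mu]_(y in setT) (J y * y)%:E = 0)%E) &
      (exists (lt lh : \bar R), [/\ (lt < 0)%E, (0 < lh)%E,
          (forall l : R, (lt < l%:E)%E -> (l%:E < lh)%E -> (Ilap J l < +oo)%E),
          blowup_left J lt & blowup_right J lh])].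

Definition alpha_ok (alpha : R -> R) : Prop :=
  continuous alpha /\
  exists am ap : R,
    [/\ alpha z @[z --> -oo] --> am,
        alpha z @[z --> +oo] --> ap,
        am < 0 < ap,
        (forall z, alpha z <= ap) &
        exists C rho : R, [/\ 0 < C, 0 < rho &
          \forall z \near +oo, ap - alpha z <= C * expR (- rho * z)]].

Definition Nop (J phi : R -> R) (z : R) : R :=
  fine (\int[mu]_(y in setT) (J y * phi (z - y))%:E)%E - phi z.

Definition nonneg_bdd_C1 (phi : R -> R) : Prop :=
  [/\ (forall z, 0 <= phi z),
      (exists M : R, forall z, `|phi z| <= M),
      (forall z, derivable phi z 1) &
      continuous (derive1 phi)].

End Defs.

From HB Require Import structures.
From mathcomp Require Import all_boot all_order all_algebra.
From mathcomp Require Import all_classical all_reals all_analysis.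
From mathcomp Require Import measurable_realfun ring lra.
Import Order.TTheory GRing.Theory Num.Theory.
Import numFieldNormedType.Exports.
Local Open Scope classical_set_scope.
Local Open Scope ring_scope.

(* Each equation has the form -s phi' = d N[phi] + r phi g with g <= -del < 0
   near -oo (for phi3 because alpha(-oo) < 0; then for phi1, phi2 because
   phi3 -> 0 makes a phi3 small).  Let M = limsup_{-oo} phi and suppose M > 0.
   Far to the left, phi <= M + eps on a half-line and the tilted function
   phi(t) - eta t attains an interior maximum at some u with phi(u) > M - eps
   and phi'(u) <= eta.  There, int J(y) phi(u - y) dy <= M + 2 eps because J
   has small mass outside a compact set, so the right-hand side is about -r del M
   while the left-hand side is >= -s eta: a contradiction for small eps, eta. *)

Section KernelAveraging.
Context {R : realType} {J : R -> R}.
Notation mu := (@lebesgue_measure R).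
Hypotheses (J_ge0 : forall y, 0 <= J y) (J_mfun : measurable_fun setT J)
  (J_int1 : (\int[mu]_(y in setT) (J y)%:E = 1)%E).

Let outside (n : nat) : set R := ~` [set` `[- (n%:R), n%:R]].

Let J_outside_mfun n : measurable_fun setT (fun y : R => J y * \1_(outside n) y).
Proof.
apply: measurable_funM => //; apply: measurable_indic.
by apply: measurableC; exact: measurable_itv.
Qed.

Let indic_outside01 n y : 0 <= (\1_(outside n) y : R) <= 1.
Proof. by rewrite indicE; case: (_ \in _) => /=; rewrite ?lexx ?ler01. Qed.

Lemma kernel_tail_small eps : 0 < eps ->
  exists n : nat, (\int[mu]_(y in setT) (J y * \1_(outside n) y)%:E <= eps%:E)%E.
Proof.
move=> eps_gt0; pose f n y := (J y * \1_(outside n) y)%:E.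
have f_mfun n : measurable_fun setT (f n) by exact/measurable_EFinP.
have J_integrable : mu.-integrable setT (fun y => (J y)%:E).
  apply/integrableP; split; first exact/measurable_EFinP.
  under eq_integral => x _ do rewrite abse_EFin ger0_norm //.
  by rewrite J_int1 ltry.
have : (\int[mu]_(y in setT) f n y)%E @[n --> \oo] --> 0%:E.
  have <- : (\int[mu]_(y in setT) (cst 0%E) y)%E = 0%:E by exact: integral0.
  apply: (@dominated_cvg _ _ _ mu setT measurableT f (cst 0%E)
    (fun y => (J y)%:E) f_mfun _ (fun _ _ => erefl) J_integrable).
  - move=> y _; apply: cvg_near_cst; near=> n.
    rewrite /f indicE memNset ?mulr0 // /outside /= => ny; apply: ny.
    by rewrite /= in_itv /= -ler_norml; near: n; exact: nbhs_infty_ger.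
  - move=> n y _; have /andP[_ i1] := indic_outside01 n y.
    rewrite abse_EFin lee_fin ger0_norm ?mulr_ge0 //.
    by rewrite -[leRHS]mulr1 ler_wpM2l.
move/fine_cvgP => [fin_f /cvgrPdist_lt/(_ eps eps_gt0) f_small].
have [n _ hn] := filterS2 _ (fun n a b => conj a b) fin_f f_small.
have [fin_n] := hn n (leqnn n); rewrite /= sub0r normrN => n_small.
exists n; rewrite -(fineK fin_n) lee_fin.
exact: le_trans (ler_norm _) (ltW n_small).
Unshelve. all: by end_near.
Qed.

Lemma kernel_average_le_tail {n : nat} {phi : R -> R} {B c z : R} :
  continuous phi -> (forall t, 0 <= phi t <= B) -> 0 <= c ->
  (forall t, t <= z + n%:R -> phi t <= c) ->
  (\int[mu]_(y in setT) (J y * phi (z - y))%:E <=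
    c%:E + B%:E * \int[mu]_(y in setT) (J y * \1_(outside n) y)%:E)%E.
Proof.
move=> phi_cont phi_bd c_ge0 phi_le_c.
have B_ge0 : 0 <= B by case/andP: (phi_bd 0); apply: le_trans.
pose A := outside n.
have JA_mfun := J_outside_mfun n.
have JA_ge0 y : 0 <= J y * \1_A y.
  by have /andP[i0 _] := indic_outside01 n y; rewrite mulr_ge0.
have phi_mfun : measurable_fun setT (fun y : R => phi (z - y)).
  apply: continuous_measurable_fun => y.
  apply: continuous_comp; last exact: phi_cont.
  by apply: continuousB; [exact: cvg_cst | exact: cvg_id].
have pointwise y : J y * phi (z - y) <= c * J y + B * (J y * \1_A y).
  have /andP[p0 pB] := phi_bd (z - y).
  have [yA|yA] := pselect (A y).
    rewrite indicE mem_set // mulr1.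
    have : J y * phi (z - y) <= J y * B by rewrite ler_wpM2l.
    have : 0 <= c * J y by rewrite mulr_ge0.
    lra.
  rewrite indicE memNset // mulr0 mulr0 addr0 [c * _]mulrC ler_wpM2l //.
  apply: phi_le_c; move: yA => /contrapT; rewrite /= in_itv /= => /andP[? ?].
  lra.
rewrite -[c%:E]mule1 -J_int1.
have -> : (c%:E * \int[mu]_(y in setT) (J y)%:E =
    \int[mu]_(y in setT) (c * J y)%:E)%E.
  under [RHS]eq_integral do rewrite EFinM.
  rewrite ge0_integralZl_EFin //; first by move=> y _; rewrite lee_fin.
  exact/measurable_EFinP.
have -> : (B%:E * \int[mu]_(y in setT) (J y * \1_A y)%:E =
    \int[mu]_(y in setT) (B * (J y * \1_A y))%:E)%E.
  under [RHS]eq_integral do rewrite EFinM.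
  rewrite ge0_integralZl_EFin //; first by move=> y _; rewrite lee_fin.
  exact/measurable_EFinP.
rewrite -ge0_integralD //.
- apply: ge0_le_integral => //.
  + by move=> y _; rewrite lee_fin mulr_ge0 //; case/andP: (phi_bd (z - y)).
  + exact/measurable_EFinP/measurable_funM.
  + by apply/measurable_EFinP; apply: measurable_funD; apply: measurable_funM.
  + by move=> y _; rewrite -EFinD lee_fin pointwise.
- by move=> y _; rewrite lee_fin mulr_ge0.
- exact/measurable_EFinP/measurable_funM.
- by move=> y _; rewrite lee_fin mulr_ge0.
- exact/measurable_EFinP/measurable_funM.
Qed.

Lemma kernel_average_le {B eps : R} : 0 <= B -> 0 < eps ->
  exists N : R, forall (phi : R -> R) (c z : R),
  continuous phi -> (forall t, 0 <= phi t <= B) -> 0 <= c ->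
  (forall t, t <= z + N -> phi t <= c) ->
  fine (\int[mu]_(y in setT) (J y * phi (z - y))%:E)%E <= c + eps.
Proof.
move=> B_ge0 eps_gt0.
have B1_gt0 : 0 < B + 1 by rewrite ltr_wpDl.
have [n tail_n] := kernel_tail_small (eps / (B + 1)) (divr_gt0 eps_gt0 B1_gt0).
exists n%:R => phi c z phi_cont phi_bd c_ge0 phi_le_c.
have tail_le : (B%:E * \int[mu]_(y in setT) (J y * \1_(outside n) y)%:E
    <= eps%:E)%E.
  apply: le_trans (lee_wpmul2l _ tail_n) _; first by rewrite lee_fin.
  rewrite -EFinM lee_fin mulrA ler_pdivrMr //.
  by rewrite mulrDr mulr1 mulrC lerDl ltW.
have := le_trans (kernel_average_le_tail phi_cont phi_bd c_ge0 phi_le_c)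
  (leeD2l _ tail_le).
rewrite -EFinD; case: (\int[mu]_(y in setT) _)%E => //= _.
by rewrite addr_ge0 // ltW.
Qed.

End KernelAveraging.

Lemma derive1_le_of_tilted_max {R : realType} (f : R -> R) (c e eta : R) :
  0 < e -> derivable f c 1 ->
  (forall t, c <= t <= c + e -> f t - eta * t <= f c - eta * c) ->
  derive1 f c <= eta.
Proof.
move=> e_gt0 df c_max; rewrite derive1E.
rewrite ['D_1 f c]cvg_at_rightE; last exact: df.
apply: limr_le.
  rewrite -(cvg_at_rightE (fun h : R => h^-1 *: ((f \o shift c) _ - f c))) //.
  apply: cvg_trans df; apply: cvg_app.
  move=> A [r r_gt0 rA]; exists r => // x xr x_gt0; apply: rA => //.
  exact/lt0r_neq0.
near=> h.
have h_gt0 : 0 < h by near: h; exists 1 => /=.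
have h_le : h <= e.
  near: h; exists e => //= h; rewrite /= distrC subr0 => /ltW hle _.
  exact: le_trans (ler_norm _) hle.
have := c_max (h + c); rewrite lerDr (ltW h_gt0) addrC lerD2l h_le => /(_ isT).
rewrite /= [_%:A]mulr1 => c_ge.
rewrite /GRing.scale /= ler_pdivrMl // mulrC.
by move: c_ge; rewrite mulrDr (addrC h c); lra.
Unshelve. all: by end_near.
Qed.

Lemma tilted_rolle {R : realType} {phi : R -> R} {eta w z : R} :
  (forall t, derivable phi t 1) -> w <= z ->
  phi z - eta * z < phi w - eta * w ->
  exists u, [/\ w <= u < z, phi w - eta * w <= phi u - eta * u
              & derive1 phi u <= eta].
Proof.
move=> dphi wz zw.
have phi_cont : continuous phi.
  by move=> x; apply: differentiable_continuous; apply/derivable1_diffP.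
have tilt_cont : {within `[w, z], continuous (fun t => phi t - eta * t)}.
  apply: continuous_subspaceT => x; apply: continuousB; first exact: phi_cont.
  by apply: continuousM; [exact: cvg_cst | exact: cvg_id].
have [u /[dup] u_in + u_max] := EVT_max wz tilt_cont.
rewrite in_itv /= => /andP[wu uz].
have u_ge_w : phi w - eta * w <= phi u - eta * u.
  by apply: u_max; rewrite in_itv /= lexx wz.
have u_lt_z : u < z.
  by rewrite lt_neqAle uz andbT; apply/eqP => uE; move: u_ge_w; rewrite uE; lra.
exists u; split => //; first by rewrite wu.
apply: (@derive1_le_of_tilted_max R phi u (z - u)) => //; first lra.
move=> t /andP[ut tu]; apply: u_max; rewrite in_itv /=; apply/andP; split; lra.
Qed.

Lemma cvgNy0_or_limsupNy_gt0 {R : realType} {phi : R -> R} {B : R} :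
  (forall t, 0 <= phi t <= B) ->
  phi z @[z --> -oo] --> 0 \/
  exists2 M, 0 < M &
    (forall eps, 0 < eps -> exists t0, forall t, t <= t0 -> phi t <= M + eps) /\
    (forall eps t, 0 < eps -> exists2 w, w <= t & M - eps < phi w).
Proof.
move=> phi_bd.
pose E t := phi @` [set w | w <= t].
have E_ub t : has_ubound (E t) by exists B => _ [v _ <-]; case/andP: (phi_bd v).
have E_ne t : E t !=set0 by exists (phi t); exists t => /=.
pose S t := sup (E t).
have S_ge w t : w <= t -> phi w <= S t.
  by move=> wt; apply: ub_le_sup => //; exists w.
have S_adh eps t : 0 < eps -> exists2 w, w <= t & S t - eps < phi w.
  move=> eps_gt0.
  have [_ [w wt <-] ?] := sup_adherent eps_gt0 (conj (E_ne t) (E_ub t)).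
  by exists w.
pose M := inf (range S).
have S_ge0 t : 0 <= S t.
  by apply: le_trans (S_ge t t (lexx t)); case/andP: (phi_bd t).
have S_lb : has_lbound (range S) by exists 0 => _ [t _ <-].
have S_ne : range S !=set0 by exists (S 0); exists 0.
have M_le t : M <= S t by apply: ge_inf => //; exists t.
have M_ge0 : 0 <= M by apply: lb_le_inf => // _ [t _ <-].
have M_adh eps : 0 < eps -> exists t0, S t0 < M + eps.
  move=> eps_gt0; have [_ [t0 _ <-] ?] := inf_adherent eps_gt0 (conj S_ne S_lb).
  by exists t0.
have M_above eps : 0 < eps -> exists t0, forall t, t <= t0 -> phi t <= M + eps.
  move=> /M_adh[t0 t0_lt]; exists t0 => t tt0.
  exact/ltW/(le_lt_trans (S_ge t t0 tt0)).
have [M0|M_neq0] := eqVneq M 0; [left | right].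
  apply/cvgrPdist_lt => eps eps_gt0.
  have eps2_gt0 : 0 < eps / 2 by rewrite divr_gt0.
  have [t0 t0_above] := M_above _ eps2_gt0.
  exists t0; split; first exact: num_real.
  move=> t tt0; rewrite sub0r normrN ger0_norm; last by case/andP: (phi_bd t).
  by move: (t0_above t (ltW tt0)); rewrite M0 add0r; lra.
exists M; first by rewrite lt_def M_neq0.
split=> // eps t eps_gt0; have [w wt w_close] := S_adh eps t eps_gt0.
by exists w => //; have := M_le t; lra.
Qed.
Lemma exists_slope_le_near_limsup {R : realType} {phi : R -> R}
    {M eps eta T : R} :
  (forall t, derivable phi t 1) -> 0 < eps -> 0 < eta ->
  (forall t, t <= T -> phi t <= M + eps) ->
  (forall t, exists2 w, w <= t & M - eps < phi w) ->
  exists u, [/\ u < T, M - eps < phi u & derive1 phi u <= eta].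
Proof.
move=> phi_der eps_gt0 eta_gt0 phi_le phi_close.
pose L := 2 * eps / eta.
have L_gt0 : 0 < L by rewrite divr_gt0 // mulr_gt0.
have eta_L : eta * L = 2 * eps by rewrite /L; field; exact: lt0r_neq0.
have [w w_le w_close] := phi_close (T - L - 1).
(* w is far enough left that the tilt eta * (T - w) beats the oscillation 2 eps *)
have tilt_lt : phi T - eta * T < phi w - eta * w.
  have : eta * (L + 1) <= eta * (T - w) by rewrite ler_pM2l //; lra.
  have := phi_le T (lexx T).
  by rewrite mulrDr mulr1 eta_L mulrBr; lra.
have w_T : w <= T by lra.
have [u [/andP[w_u u_T] u_ge u_der]] := tilted_rolle phi_der w_T tilt_lt.
exists u; split => //.
have : eta * w <= eta * u by rewrite ler_pM2l.
lra.
Qed.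

Section NegativeGrowthRate.
Context {R : realType} {J phi g : R -> R} {s d r del : R}.
Hypotheses (s_gt0 : 0 < s) (d_gt0 : 0 < d) (r_gt0 : 0 < r) (del_gt0 : 0 < del).
Hypotheses (J_ge0 : forall y, 0 <= J y) (J_mfun : measurable_fun setT J)
  (J_int1 : (\int[@lebesgue_measure R]_(y in setT) (J y)%:E = 1)%E).
Hypotheses (phi_C1 : nonneg_bdd_C1 phi)
  (g_neg : \forall z \near -oo, g z <= - del)
  (phi_eq : forall z, - s * derive1 phi z = d * Nop J phi z + r * phi z * g z).

Lemma cvgNy0_of_growth_rate_neg : phi z @[z --> -oo] --> 0.
Proof.
have [phi_ge0 [B phi_le] phi_der _] := phi_C1.
have phi_bd t : 0 <= phi t <= B.
  by rewrite phi_ge0 (le_trans (ler_norm _) (phi_le t)).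
have B_ge0 : 0 <= B by case/andP: (phi_bd 0); apply: le_trans.
have phi_cont : continuous phi.
  by move=> x; apply: differentiable_continuous; apply/derivable1_diffP.
have [//|[M M_gt0 [M_above M_attained]]] := cvgNy0_or_limsupNy_gt0 phi_bd.
exfalso.
have [Zg g_le] : exists Zg, forall z, z <= Zg -> g z <= - del.
  by case: g_neg => Zg [_ g_le]; exists (Zg - 1) => z zZ; apply: g_le; lra.
pose K := r * del * M.
have K_gt0 : 0 < K by rewrite !mulr_gt0.
pose eps := Num.min (M / 2) (K / (12 * d)).
have eps_gt0 : 0 < eps by rewrite lt_min !divr_gt0 // mulr_gt0.
have eps_le : eps <= M / 2 by rewrite ge_min lexx.
have d_eps_le : d * eps <= K / 12.
  have : eps <= K / (12 * d) by rewrite ge_min lexx orbT.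
  by rewrite ler_pdivlMr ?mulr_gt0 // ler_pdivlMr //; lra.
pose eta := K / (8 * s).
have eta_gt0 : 0 < eta by rewrite divr_gt0 // mulr_gt0.
have s_eta : s * eta = K / 8 by rewrite /eta; field; exact: lt0r_neq0.
have [N phi_avg] := kernel_average_le J_ge0 J_mfun J_int1 B_ge0 eps_gt0.
have [t0 t0_above] := M_above eps eps_gt0.
pose T := Num.min (t0 - N) (Num.min t0 Zg).
have [T_N T_t0 T_Zg] : [/\ T <= t0 - N, T <= t0 & T <= Zg].
  by rewrite /T !ge_min !lexx !orbT.
have [u [u_T phi_u u_der]] := exists_slope_le_near_limsup phi_der eps_gt0 eta_gt0
  (fun t tT => t0_above t (le_trans tT T_t0)) (M_attained eps ^~ eps_gt0).
have avg_u : Nop J phi u <= M + 2 * eps - phi u.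
  have phi_left t : t <= u + N -> phi t <= M + eps.
    by move=> tu; apply: t0_above; lra.
  have Meps_ge0 : 0 <= M + eps by rewrite addr_ge0 ?ltW.
  by have := phi_avg phi _ u phi_cont phi_bd Meps_ge0 phi_left; rewrite /Nop; lra.
(* eps <= M/2, d eps <= K/12 and s eta = K/8 turn the equation at u into
   -K/8 <= -s phi'(u) = d N[phi](u) + r phi(u) g(u) <= K/4 - K/2. *)
have := phi_eq u.
have : d * Nop J phi u <= 3 * (d * eps) by rewrite mulrCA ler_pM2l //; lra.
have : r * phi u * g u <= - (r * del * phi u).
  have -> : - (r * del * phi u) = r * phi u * (- del) by ring.
  apply: ler_wpM2l; first exact: mulr_ge0 (ltW r_gt0) (phi_ge0 u).
  by apply: g_le; lra.
have : K / 2 <= r * del * phi u.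
  have -> : K / 2 = r * del * (M / 2) by rewrite /K; field.
  by apply: ler_wpM2l; [exact: mulr_ge0 (ltW r_gt0) (ltW del_gt0) | lra].
have : s * derive1 phi u <= K / 8 by rewrite -s_eta ler_pM2l.
lra.
Qed.

End NegativeGrowthRate.

Theorem proposition2p3 (R : realType)
  (d1 d2 d3 r1 r2 r3 a b h k : R)
  (J1 J2 J3 alpha : R -> R) (s : R)
  (phi1 phi2 phi3 : R -> R) :
  0 < d1 -> 0 < d2 -> 0 < d3 -> 0 < r1 -> 0 < r2 -> 0 < r3 ->
  1 < a -> 0 < h < 1 -> 0 < k < 1 -> 0 < b -> b < 1 / (2 * (a - 1)) ->
  kernel_ok J1 -> kernel_ok J2 -> kernel_ok J3 ->
  alpha_ok alpha ->
  0 < s ->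
  nonneg_bdd_C1 phi1 -> nonneg_bdd_C1 phi2 -> nonneg_bdd_C1 phi3 ->
  (forall z, - s * derive1 phi1 z = d1 * Nop J1 phi1 z
        + r1 * phi1 z * (-1 - phi1 z - k * phi2 z + a * phi3 z)) ->
  (forall z, - s * derive1 phi2 z = d2 * Nop J2 phi2 z
        + r2 * phi2 z * (-1 - h * phi1 z - phi2 z + a * phi3 z)) ->
  (forall z, - s * derive1 phi3 z = d3 * Nop J3 phi3 z
        + r3 * phi3 z * (alpha z - b * phi1 z - b * phi2 z - phi3 z)) ->
  [/\ phi1 z @[z --> -oo] --> 0,
      phi2 z @[z --> -oo] --> 0 &
      phi3 z @[z --> -oo] --> 0].
Proof.
move=> d1_gt0 d2_gt0 d3_gt0 r1_gt0 r2_gt0 r3_gt0 a_gt1.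
move=> /andP[h_gt0 _] /andP[k_gt0 _] b_gt0 _.
move=> [[J1_ge0 J1_mfun] J1_int1 _ _ _] [[J2_ge0 J2_mfun] J2_int1 _ _ _].
move=> [[J3_ge0 J3_mfun] J3_int1 _ _ _].
move=> [_ [am [_ [alpha_am _ /andP[am_lt0 _] _ _]]]].
move=> s_gt0 phi1_C1 phi2_C1 phi3_C1 phi1_eq phi2_eq phi3_eq.
have [phi1_ge0 _ _ _] := phi1_C1; have [phi2_ge0 _ _ _] := phi2_C1.
have [phi3_ge0 _ _ _] := phi3_C1.
have phi3_cvg : phi3 z @[z --> -oo] --> 0.
  apply: (cvgNy0_of_growth_rate_neg (del := - (am / 2)) s_gt0 d3_gt0 r3_gt0 _
    J3_ge0 J3_mfun J3_int1 phi3_C1 _ phi3_eq); first lra.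
  have alpha_lt : \forall z \near -oo, alpha z < am / 2.
    by apply: (@cvgr_lt _ _ _ _ _ am alpha_am); lra.
  apply: filterS alpha_lt => z alpha_z.
  have := mulr_ge0 (ltW b_gt0) (phi1_ge0 z).
  have := mulr_ge0 (ltW b_gt0) (phi2_ge0 z).
  by have := phi3_ge0 z; lra.
have a_phi3 : \forall z \near -oo, a * phi3 z <= 1 / 2.
  have phi3_lt : \forall z \near -oo, phi3 z < 1 / (2 * a).
    by apply: (@cvgr_lt _ _ _ _ _ 0 phi3_cvg); rewrite divr_gt0 //; lra.
  apply: filterS phi3_lt => z.
  by rewrite ltr_pdivlMr; lra.
split => //.
- apply: (cvgNy0_of_growth_rate_neg (del := 1 / 2) s_gt0 d1_gt0 r1_gt0 _
    J1_ge0 J1_mfun J1_int1 phi1_C1 _ phi1_eq); first lra.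
  apply: filterS a_phi3 => z a_phi3_z.
  by have := phi1_ge0 z; have := mulr_ge0 (ltW k_gt0) (phi2_ge0 z); lra.
- apply: (cvgNy0_of_growth_rate_neg (del := 1 / 2) s_gt0 d2_gt0 r2_gt0 _
    J2_ge0 J2_mfun J2_int1 phi2_C1 _ phi2_eq); first lra.
  apply: filterS a_phi3 => z a_phi3_z.
  by have := phi2_ge0 z; have := mulr_ge0 (ltW h_gt0) (phi1_ge0 z); lra.
Qed.
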